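(* Let $A\in\mathbb{R}^{m\times n}$ have rank $r\ge 1$, and let $S$ be an ordered subset of $r$ elements of $\{1,\dots,m\}$ such that the rows of $A$ indexed by $S$ are linearly independent. Let $\epsilon\ge 0$ and let $T$ be an ordered subset of $r$ elements of $\{1,\dots,n\}$ such that $A[S,T]$ is a $(1+\epsilon)$-local maximizer for the absolute determinant on the set of $r\times r$ nonsingular submatrices of $A[S,:]$. Let $\hat A:=A[:,T]$ and let $H\in\mathbb{R}^{n\times m}$ be the matrix whose rows indexed by $T$ are given by $\hat A^+=(\hat A^\top\hat A)^{-1}\hat A^\top$ and whose other rows are zero. Then $H$ is an ah-symmetric reflexive generalized inverse of $A$ satisfying $\|H\|_1\le r(1+\epsilon)\|H^r_{opt}\|_1$, where $H^r_{opt}$ is an ah-symmetric reflexive generalized inverse of $A$ of minimum 1-norm.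
   Context: $A[S,T]$ is the submatrix with row indices $S$ and column indices $T$; $A[S,:]$ (resp. $A[:,T]$) is the submatrix formed by rows $S$ (resp. columns $T$). $\|H\|_1=\sum_{i,j}|H_{ij}|$. $H$ is a generalized inverse of $A$ if $AHA=A$, reflexive if additionally $HAH=H$, and ah-symmetric if $AH$ is symmetric. For fixed $\epsilon\ge0$, $A[S,T]$ is a $(1+\epsilon)$-local maximizer for the absolute determinant on the set of $r\times r$ nonsingular submatrices of $A[S,:]$ if $A[S,T]$ is nonsingular and $|\det(A[S,T])|$ cannot be increased by a factor of more than $1+\epsilon$ by swapping an element of $T$ with one element from its complement in $\{1,\dots,n\}$. *)

From HB Require Import structures.
From mathcomp Require Import all_boot all_order all_algebra.
Set Implicit Arguments. Unset Strict Implicit. Unset Printing Implicit Defensive.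
Import Order.TTheory GRing.Theory Num.Theory.
Local Open Scope ring_scope.

Definition submatrix (R : Type) m n p q (A : 'M[R]_(m, n))
  (S : 'I_p -> 'I_m) (T : 'I_q -> 'I_n) : 'M[R]_(p, q) :=
  \matrix_(i < p, j < q) A (S i) (T j).

Definition swap_idx n r (T : 'I_r -> 'I_n) (k : 'I_r) (j : 'I_n) : 'I_r -> 'I_n :=
  fun i => if i == k then j else T i.

Definition local_max_det (R : numDomainType) m n r (A : 'M[R]_(m, n))
  (S : 'I_r -> 'I_m) (T : 'I_r -> 'I_n) (eps : R) : Prop :=
  \det (submatrix A S T) != 0 /\
  forall (k : 'I_r) (j : 'I_n), (forall i, T i != j) ->
    `|\det (submatrix A S (swap_idx T k j))| <= (1 + eps) * `|\det (submatrix A S T)|.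

Definition norm1 (R : numDomainType) m n (H : 'M[R]_(m, n)) : R :=
  \sum_(i < m) \sum_(j < n) `|H i j|.

Definition gen_inverse (R : pzRingType) m n (A : 'M[R]_(m, n)) (H : 'M[R]_(n, m)) :=
  A *m H *m A = A.
Definition reflexive_ginv (R : pzRingType) m n (A : 'M[R]_(m, n)) (H : 'M[R]_(n, m)) :=
  gen_inverse A H /\ H *m A *m H = H.
Definition ah_symmetric (R : pzRingType) m n (A : 'M[R]_(m, n)) (H : 'M[R]_(n, m)) :=
  (A *m H)^T = A *m H.

Definition pinv_fcr (R : fieldType) m r (B : 'M[R]_(m, r)) : 'M[R]_(r, m) :=
  invmx (B^T *m B) *m B^T.

Definition place_rows (R : pzRingType) n m r (T : 'I_r -> 'I_n) (P : 'M[R]_(r, m))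
  : 'M[R]_(n, m) :=
  (\matrix_(j < n, k < r) (if T k == j then 1 else 0)) *m P.

From HB Require Import structures.
From mathcomp Require Import all_boot all_order all_algebra.
Set Implicit Arguments. Unset Strict Implicit. Unset Printing Implicit Defensive.
Import Order.TTheory GRing.Theory Num.Theory.
Local Open Scope ring_scope.

(* Write [Ahat := A[:,T] = A E] with [E] the column-selection matrix and
   [P := Ahat^+], so that [H = E P].  Since [\rank Ahat = \rank A], the column
   space of [A] is that of [Ahat]; hence [A H = Ahat P] is the orthogonal
   projector onto it, which makes [H] an ah-symmetric reflexive generalized
   inverse.  The product [A X] is the same projector for every ah-symmetric
   generalized inverse [X]; multiplying by the row selection [S] gives
   [A[S,T] P = A[S,:] X], i.e. [P = (A[S,T]^-1 A[S,:]) X].  By Cramer's rule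
   the entries of [A[S,T]^-1 A[S,:]] are ratios of determinants obtained by
   swapping one column of [T], so local maximality bounds them by [1 + eps];
   each column sum is then at most [r (1 + eps)], which bounds [\|P\|_1] and
   [\|H\|_1 <= \|P\|_1]. *)

Lemma submatrixE (R : Type) m n p q (A : 'M[R]_(m, n))
    (S : 'I_p -> 'I_m) (T : 'I_q -> 'I_n) :
  submatrix A S T = mxsub S T A.
Proof. by []. Qed.

Lemma place_rowsE (R : pzRingType) n m r (T : 'I_r -> 'I_n) (P : 'M[R]_(r, m)) :
  place_rows T P = colsub T 1%:M *m P.
Proof. by congr (_ *m _); apply/matrixP => j k; rewrite !mxE eq_sym; case: eqP. Qed.

Section Norm1.

Variable R : numDomainType.

Lemma norm1_mulmx_le p q s (c : R) (M : 'M[R]_(p, q)) (N : 'M[R]_(q, s)) :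
  (forall j, \sum_i `|M i j| <= c) -> norm1 (M *m N) <= c * norm1 N.
Proof.
move=> colM; rewrite /norm1.
apply: (@le_trans _ _ (\sum_i \sum_k \sum_j `|M i j| * `|N j k|)).
  apply: ler_sum => i _; apply: ler_sum => k _; rewrite mxE.
  apply: le_trans (ler_norm_sum _ _ _) _.
  by apply: ler_sum => j _; rewrite normrM.
under eq_bigr do rewrite exchange_big /=.
rewrite exchange_big mulr_sumr; apply: ler_sum => j _.
rewrite exchange_big mulr_sumr; apply: ler_sum => k _.
by rewrite -mulr_suml ler_wpM2r.
Qed.

Lemma norm1_place_rows_le n m r (T : 'I_r -> 'I_n) (P : 'M[R]_(r, m)) :
  norm1 (place_rows T P) <= norm1 P.
Proof.
rewrite place_rowsE -[leRHS]mul1r; apply: norm1_mulmx_le => k.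
rewrite (bigD1 (T k)) //= big1 ?mxE ?eqxx ?normr1 ?addr0 // => j /negbTE jTk.
by rewrite !mxE jTk normr0.
Qed.

End Norm1.

Lemma ah_symmetric_ginv_unique (R : comPzRingType) m n (A : 'M[R]_(m, n))
    (X Y : 'M[R]_(n, m)) :
  gen_inverse A X -> ah_symmetric A X -> gen_inverse A Y -> ah_symmetric A Y ->
  A *m X = A *m Y.
Proof.
move=> AXA symX AYA symY.
(* [A X = (A Y)(A X) = ((A X)(A Y))^T = (A Y)^T = A Y] *)
have XY : A *m X *m (A *m Y) = A *m Y by rewrite mulmxA AXA.
have YX : A *m Y *m (A *m X) = A *m X by rewrite mulmxA AYA.
by rewrite -YX -symX -symY -trmx_mul XY symY.
Qed.

Lemma cramer_invmx (R : fieldType) r (B : 'M[R]_r) (v : 'cV[R]_r) (i : 'I_r) :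
  B \in unitmx ->
  (invmx B *m v) i 0 = \det (\matrix_(k, l) (if l == i then v k 0 else B k l)) / \det B.
Proof.
move=> Bunit; set B' := \matrix_(k, l) _.
have cofB' k : cofactor B' k i = cofactor B k i.
  rewrite /cofactor; congr (_ * \det _); apply/matrixP => a b.
  by rewrite !mxE eq_sym (negbTE (neq_lift i b)).
rewrite /invmx Bunit mxE (expand_det_col B' i) mulr_suml; apply: eq_bigr => k _.
by rewrite cofB' !mxE eqxx [RHS]mulrC -mulrA (mulrC (v k 0)).
Qed.

Lemma local_max_det_coef_le (R : numFieldType) m n r (A : 'M[R]_(m, n))
    (S : 'I_r -> 'I_m) (T : 'I_r -> 'I_n) (eps : R) :
  0 <= eps -> local_max_det A S T eps ->
  forall i j, `|(invmx (submatrix A S T) *m submatrix A S id) i j| <= 1 + eps.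
Proof.
move=> eps_ge0 [detB_neq0 maxB] i j; set B := submatrix A S T.
have Bunit : B \in unitmx by rewrite unitmxE unitfE.
have [k Tk_j | notT] := pickP (fun k => T k == j).
  have -> : (invmx B *m submatrix A S id) i j = (1%:M : 'M_r) i k.
    rewrite -(mulVmx Bunit) !mxE; apply: eq_bigr => l _.
    by rewrite !mxE (eqP Tk_j).
  by rewrite mxE normr_nat; case: (i == k); rewrite ?lerDl ?addr_ge0.
have -> : (invmx B *m submatrix A S id) i j = (invmx B *m col j (submatrix A S id)) i 0.
  by rewrite !mxE; apply: eq_bigr => l _; rewrite !mxE.
rewrite cramer_invmx // normrM normfV ler_pdivrMr ?normr_gt0 //.
have -> : \matrix_(k, l) (if l == i then col j (submatrix A S id) k 0 else B k l)
          = submatrix A S (swap_idx T i j).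
  by apply/matrixP => k l; rewrite !mxE /swap_idx; case: eqP.
by apply: maxB => k; rewrite notT.
Qed.

Section PseudoInverse.

Variable R : realFieldType.

Lemma trmx_mulmx_eq0 m r (W : 'M[R]_(m, r)) : W^T *m W = 0 -> W = 0.
Proof.
move=> WtW0; apply/matrixP => k i; rewrite mxE.
have /matrixP/(_ i i) := WtW0; rewrite !mxE => sumsq0.
have sq_ge0 (j : 'I_m) : predT j -> 0 <= W^T i j * W j i.
  by move=> _; rewrite mxE -expr2 sqr_ge0.
by have /eqP := psumr_eq0P sq_ge0 sumsq0 (i := k) isT; rewrite mxE mulf_eq0 orbb => /eqP.
Qed.

Lemma gram_unitmx m r (W : 'M[R]_(m, r)) : \rank W = r -> W^T *m W \in unitmx.
Proof.
move=> rkW; rewrite -row_free_unit -kermx_eq0; set K := kermx _.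
have KWt : K *m W^T = 0.
  apply: trmx_inj; rewrite trmx0; apply: trmx_mulmx_eq0.
  have KWtW : K *m (W^T *m W) = 0 by apply: mulmx_ker.
  by rewrite trmxK trmx_mul trmxK !mulmxA -(mulmxA K) KWtW mul0mx.
have Wt_free : row_free W^T by rewrite /row_free mxrank_tr rkW.
by rewrite -(mulmx_free_eq0 _ Wt_free) KWt.
Qed.

Lemma pinv_fcr_mulmx m r (B : 'M[R]_(m, r)) :
  \rank B = r -> pinv_fcr B *m B = 1%:M.
Proof. by move=> rkB; rewrite /pinv_fcr -mulmxA mulVmx ?gram_unitmx. Qed.

Lemma mulmx_pinv_fcr_sym m r (B : 'M[R]_(m, r)) :
  (B *m pinv_fcr B)^T = B *m pinv_fcr B.
Proof. by rewrite /pinv_fcr !trmx_mul trmx_inv trmx_mul !trmxK mulmxA. Qed.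

Lemma mulmx_rank_eq_factor m n r (A : 'M[R]_(m, n)) (E : 'M[R]_(n, r)) :
  \rank (A *m E) = \rank A -> exists D, A = A *m E *m D.
Proof.
move=> rkAE.
have AEt_sub : ((A *m E)^T <= A^T)%MS by rewrite trmx_mul submxMl.
have : (A^T <= (A *m E)^T)%MS.
  by rewrite -(mxrank_leqif_sup AEt_sub).2 !mxrank_tr rkAE.
by case/submxP => D AtD; exists D^T; rewrite -[LHS]trmxK AtD trmx_mul trmxK.
Qed.

Lemma pinv_fcr_ah_reflexive m n r (A : 'M[R]_(m, n)) (E : 'M[R]_(n, r)) :
  \rank (A *m E) = r -> \rank A = r ->
  let H := E *m pinv_fcr (A *m E) in reflexive_ginv A H /\ ah_symmetric A H.
Proof.
move=> rkAE rkA; set AE := A *m E; set P := pinv_fcr AE => H.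
have PAE : P *m AE = 1%:M by apply: pinv_fcr_mulmx.
have AH : A *m H = AE *m P by rewrite mulmxA.
have [D AD] := mulmx_rank_eq_factor (etrans rkAE (esym rkA)); rewrite -/AE in AD.
split; last by rewrite /ah_symmetric AH mulmx_pinv_fcr_sym.
split; first by rewrite /gen_inverse AH {1}AD mulmxA -(mulmxA AE) PAE mulmx1 -AD.
by rewrite -mulmxA AH /H mulmxA -(mulmxA E) PAE mulmx1.
Qed.

End PseudoInverse.

Lemma mxrank_colsub_unit (R : fieldType) m n r (A : 'M[R]_(m, n))
    (S : 'I_r -> 'I_m) (T : 'I_r -> 'I_n) :
  submatrix A S T \in unitmx -> \rank (colsub T A) = r.
Proof.
move=> /mxrank_unit rkB; apply/eqP; rewrite eqn_leq rank_leq_col /=.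
by rewrite -[X in (X <= _)%N]rkB submatrixE mxsubrc rowsubE mxrankM_maxr.
Qed.

Theorem theorem3p7 (R : realFieldType) (m n r : nat) (A : 'M[R]_(m, n))
  (S : 'I_r -> 'I_m) (T : 'I_r -> 'I_n) (eps : R) :
  (1 <= r)%N -> \rank A = r ->
  injective S -> row_free (submatrix A S id) ->
  0 <= eps -> injective T ->
  local_max_det A S T eps ->
  let H := place_rows T (pinv_fcr (submatrix A id T)) in
  [/\ reflexive_ginv A H, ah_symmetric A H &
      forall H' : 'M[R]_(n, m), reflexive_ginv A H' -> ah_symmetric A H' ->
        norm1 H <= r%:R * (1 + eps) * norm1 H'].
Proof.
move=> _ rkA _ _ eps_ge0 _ maxB H.
set B := submatrix A S T; set P := pinv_fcr (submatrix A id T).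
have Bunit : B \in unitmx by rewrite unitmxE unitfE; case: maxB.
have Ahat : submatrix A id T = A *m colsub T 1%:M by rewrite mulmx_colsub mulmx1.
have [Hginv Hsym] : reflexive_ginv A H /\ ah_symmetric A H.
  rewrite /H place_rowsE Ahat; apply: pinv_fcr_ah_reflexive => //.
  by rewrite -Ahat (mxrank_colsub_unit Bunit).
split=> // H' [H'ginv _] H'sym.
have BP : B *m P = submatrix A S id *m H'.
  have AH : A *m H = submatrix A id T *m P by rewrite /H place_rowsE mulmxA -Ahat.
  rewrite submatrixE rowsubE -mulmxA -(ah_symmetric_ginv_unique Hginv.1) //.
  by rewrite AH mulmxA -rowsubE /B !submatrixE mxsubrc.
have PE : P = invmx B *m submatrix A S id *m H' by rewrite -mulmxA -BP mulKmx.
apply: le_trans (norm1_place_rows_le _ _) _.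
rewrite -/P PE; apply: norm1_mulmx_le => j.
apply: le_trans (_ : \sum_(i < r) (1 + eps) <= _).
  by apply: ler_sum => i _; apply: local_max_det_coef_le.
by rewrite sumr_const card_ord mulr_natl.
Qed.
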